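(* Let $q$ be a prime power with $q\equiv 1\pmod 4$, $n\ge 2$, and let $M=(m_{ij})$ be an $n\times n$ matrix with entries in $\mathbb{F}_q$. (i) If $m_{ij}+m_{ji}=0$ for all $1\le i<j\le n$ and $m_{ii}=m_{11}$ for all $i$, then $\mathrm{Num}_k(M)_q=\{km_{11}\}$ for all $k\in\mathbb{F}_q$ and $0\in\mathrm{Num}'_0(M)$. (ii) If $M$ does not satisfy the hypotheses of (i), then $\mathrm{Num}_0(M)$ contains at least $(q-1)/2$ elements of $\mathbb{F}_q^*$.
   Context: The Hermitian form on $\mathbb{F}_{q^2}^n$ is $\langle u,v\rangle=\sum_i u_i^qv_i$. For an $n\times n$ matrix $M$ over $\mathbb{F}_{q^2}$: $\mathrm{Num}_0(M)=\{\langle u,Mu\rangle: u\in\mathbb{F}_{q^2}^n,\ \langle u,u\rangle=0\}$, $\mathrm{Num}'_0(M)=\{\langle u,Mu\rangle: u\in\mathbb{F}_{q^2}^n\setminus\{0\},\ \langle u,u\rangle=0\}$. For $M$ with entries in $\mathbb{F}_q$ and $k\in\mathbb{F}_q$: $\mathrm{Num}_k(M)_q=\{\langle u,Mu\rangle: u\in\mathbb{F}_q^n,\ \langle u,u\rangle=k\}$; for $u=(x_1,\dots,x_n)\in\mathbb{F}_q^n$, $\langle u,u\rangle=\sum x_i^2$ and $\langle u,Mu\rangle=\sum_{i,j}m_{ij}x_ix_j$. *)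

From HB Require Import structures.
From mathcomp Require Import all_boot all_order all_algebra.
Set Implicit Arguments. Unset Strict Implicit. Unset Printing Implicit Defensive.
Import GRing.Theory.
Local Open Scope ring_scope.

(* Hermitian form on L^n (L = F_{q^2}): <u,v> = sum_i u_i^q v_i *)
Definition herm (L : fieldType) (q n : nat) (u v : 'cV[L]_n) : L :=
  \sum_(i < n) (u i 0) ^+ q * v i 0.

Definition Num0 (L : finFieldType) (q n : nat) (M : 'M[L]_n) : {set L} :=
  [set herm q u (M *m u) | u in [set u : 'cV[L]_n | herm q u u == 0]].

Definition Num0' (L : finFieldType) (q n : nat) (M : 'M[L]_n) : {set L} :=
  [set herm q u (M *m u) | u in [set u : 'cV[L]_n | (u != 0) && (herm q u u == 0)]].

Definition Numk_q (F : finFieldType) (n : nat) (M : 'M[F]_n) (k : F) : {set F} :=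
  [set \sum_(i < n) \sum_(j < n) M i j * x i 0 * x j 0
     | x : 'cV[F]_n in [set x : 'cV[F]_n | \sum_(i < n) x i 0 ^+ 2 == k]].

Definition hyp_i (F : fieldType) (n : nat) (M : 'M[F]_n) : Prop :=
  (forall i j : 'I_n, (i < j)%N -> M i j + M j i = 0) /\
  (forall i j : 'I_n, M i i = M j j).

From mathcomp Require Import all_boot all_order all_algebra cyclic finfield.
From mathcomp Require Import zify ring.
Import GRing.Theory.
Local Open Scope ring_scope.
Set Implicit Arguments. Unset Strict Implicit. Unset Printing Implicit Defensive.

(* As q = 1 (mod 4), F_q contains a primitive fourth root of unity e, so
   e^2 = -1 and 2 != 0.  The Frobenius u |-> u^q fixes F_q^n inside
   F_(q^2)^n, so there <u,u> and <u,Mu> are the quadratic forms sum x_i^2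
   and sum m_ij x_i x_j.
   (i) The hypotheses make sum m_ij x_i x_j = m_11 sum x_i^2, every k is
   ((k+1)/2)^2 + (e(k-1)/2)^2, and (1, e, 0, ..., 0) is a nonzero isotropic
   vector.
   (ii) Otherwise some i != j has (m_ii - m_jj, m_ij + m_ji) != (0, 0); for
   one of the two square roots e of -1, c = m_ii - m_jj + e (m_ij + m_ji) is
   nonzero, and the isotropic vectors a (e_i + e e_j) have <u,Mu> = c a^2,
   which takes (q-1)/2 nonzero values as a ranges over F_q^*. *)

Lemma finField_prim_root (F : finFieldType) : exists z : F, #|F|.-1.-primitive_root z.
Proof.
have F_gt1 := finNzRing_gt1 F; have q_gt0 : (0 < #|F|.-1)%N by rewrite -ltnS prednK // ltnW.
have unity_nz (x : F) : x != 0 -> #|F|.-1.-unity_root x.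
  move=> x_nz; rewrite unity_rootE; apply/eqP/(mulIf x_nz).
  by rewrite mul1r -exprSr prednK ?expf_card // ltnW.
have : has #|F|.-1.-primitive_root (enum [pred x : F | x != 0]).
  apply: has_prim_root => //; [|exact: enum_uniq|by rewrite -cardE cardC1].
  by apply/allP => x; rewrite mem_enum; apply: unity_nz.
by case/hasP=> z _ z_prim; exists z.
Qed.

Lemma prim4_root_sqr (R : idomainType) (z : R) : 4.-primitive_root z -> z ^+ 2 = -1.
Proof.
move=> z_prim; have z2_neq1 : z ^+ 2 != 1 by rewrite -(expr0 z) (eq_prim_root_expr z_prim).
have : (z ^+ 2) ^+ 2 == 1 by rewrite -exprM prim_expr_order.
by rewrite sqrf_eq1 (negbTE z2_neq1) => /eqP.
Qed.

Lemma finField_sqrt_opp1 (F : finFieldType) :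
  (#|F| %% 4 = 1)%N -> exists2 e : F, e ^+ 2 = -1 & (2 : F) != 0.
Proof.
move=> card_mod4; have [z z_prim] := finField_prim_root F.
have dvd4 : (4 %| #|F|.-1)%N.
  by rewrite {1}(divn_eq #|F| 4) card_mod4 addn1 dvdn_mull.
have w_prim := dvdn_prim_root z_prim dvd4.
exists (z ^+ (#|F|.-1 %/ 4)); first exact: prim4_root_sqr.
exact: (prim_root_dvd_eq0 w_prim).
Qed.

Lemma sum_two_sqr_exists (F : fieldType) (e k : F) :
  e ^+ 2 = -1 -> (2 : F) != 0 -> exists a b : F, a ^+ 2 + b ^+ 2 = k.
Proof.
move=> e2 two_nz; exists ((k + 1) / 2), (e * ((k - 1) / 2)).
by rewrite [(e * _) ^+ 2]exprMn e2; field.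
Qed.

Lemma big_supp2 (I : finType) (V : nmodType) (i j : I) (g : I -> V) :
  i != j -> (forall l, l != i -> l != j -> g l = 0) -> \sum_l g l = g i + g j.
Proof.
move=> ij g0; rewrite (bigD1 i) //= (bigD1 j) 1?eq_sym //= big1 ?addr0 //.
by move=> l /andP[li lj]; apply: g0.
Qed.

Section QuadraticForm.
Variables (R : comRingType) (n : nat).
Implicit Types (M : 'M[R]_n) (x : 'cV[R]_n) (i j : 'I_n) (a b : R).

Definition qform M x : R := \sum_(i < n) \sum_(j < n) M i j * x i 0 * x j 0.
Definition sqnorm x : R := \sum_(i < n) x i 0 ^+ 2.

Definition col2 i j a b : 'cV[R]_n :=
  \col_l (if l == i then a else if l == j then b else 0).

Lemma col2E i j a b l :
  col2 i j a b l 0 = if l == i then a else if l == j then b else 0.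
Proof. by rewrite mxE. Qed.

Lemma col2_eq0 i j a b (l : 'I_n) : l != i -> l != j -> col2 i j a b l 0 = 0.
Proof. by move=> li lj; rewrite col2E (negbTE li) (negbTE lj). Qed.

Lemma col2_neq0 i j a b : a != 0 -> col2 i j a b != 0.
Proof.
move=> a_nz; apply: contra_neq a_nz => /(congr1 (fun x => x i 0)).
by rewrite col2E eqxx mxE.
Qed.

Variables (i j : 'I_n) (a b : R).
Hypothesis ij : i != j.

Let col2_i : col2 i j a b i 0 = a.
Proof. by rewrite col2E eqxx. Qed.

Let col2_j : col2 i j a b j 0 = b.
Proof. by rewrite col2E eq_sym (negbTE ij) eqxx. Qed.

Lemma sqnorm_col2 : sqnorm (col2 i j a b) = a ^+ 2 + b ^+ 2.
Proof.
rewrite /sqnorm (big_supp2 ij) ?col2_i ?col2_j // => l li lj.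
by rewrite col2_eq0 // expr0n.
Qed.

Lemma qform_col2 M :
  qform M (col2 i j a b) = M i i * a ^+ 2 + M j j * b ^+ 2 + (M i j + M j i) * a * b.
Proof.
rewrite /qform (big_supp2 ij) => [|l li lj]; last first.
  by rewrite big1 // => m _; rewrite col2_eq0 // mulr0 mul0r.
rewrite !(big_supp2 ij) ?col2_i ?col2_j; first by ring.
all: by move=> l li lj; rewrite col2_eq0 // mulr0.
Qed.

End QuadraticForm.

Lemma hyp_i_skew (F : fieldType) n (M : 'M[F]_n) (k l : 'I_n) :
  hyp_i M -> k != l -> M k l + M l k = 0.
Proof.
move=> [skew _]; case: (ltngtP k l) => [/skew|/skew|/val_inj->] //.
  by rewrite addrC.
by rewrite eqxx.
Qed.

Lemma qform_hyp_i (F : fieldType) n (M : 'M[F]_n) (x : 'cV[F]_n) (i : 'I_n) :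
  (2 : F) != 0 -> hyp_i M -> qform M x = M i i * sqnorm x.
Proof.
move=> two_nz hM; have [_ diag] := hM.
apply: (mulfI two_nz); rewrite !mulr_natl mulr2n {2}/qform exchange_big.
rewrite -big_split mulr_sumr -sumrMnl.
apply: eq_bigr => k _; rewrite -big_split (bigD1 k) //= big1 => [|l lk].
  by rewrite (diag k i) addr0 mulr2n expr2 mulrA.
rewrite [X in X = 0](_ : _ = (M k l + M l k) * (x k 0 * x l 0)); last by ring.
by rewrite hyp_i_skew 1?eq_sym // mul0r.
Qed.

Lemma Numk_q_hyp_i (F : finFieldType) n (M : 'M[F]_n) (e : F) (i : 'I_n) (k : F) :
  e ^+ 2 = -1 -> (2 : F) != 0 -> (1 < n)%N -> hyp_i M -> Numk_q M k = [set k * M i i].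
Proof.
move=> e2 two_nz n_gt1 hM; apply/setP => y; rewrite inE.
apply/imsetP/eqP => [[x] | ->].
  rewrite inE -/(sqnorm x) => /eqP x_k ->.
  by rewrite -/(qform M x) (qform_hyp_i _ i two_nz hM) x_k mulrC.
have [a [b ab_k]] := sum_two_sqr_exists k e2 two_nz.
pose i0 : 'I_n := Ordinal (ltnW n_gt1); pose i1 : 'I_n := Ordinal n_gt1.
exists (col2 i0 i1 a b); first by rewrite inE -/(sqnorm _) sqnorm_col2 ?ab_k.
by rewrite -/(qform M _) (qform_hyp_i _ i two_nz hM) sqnorm_col2 // ab_k mulrC.
Qed.

Section HermitianEmbedding.
Variables (F L : finFieldType) (iota : {rmorphism F -> L}) (q n : nat).
Hypothesis card_F : #|F| = q.

Let iota_frobenius (a : F) : iota a ^+ q = iota a.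
Proof. by rewrite -rmorphXn -card_F expf_card. Qed.

Lemma herm_map_sqnorm (x : 'cV[F]_n) :
  herm q (map_mx iota x) (map_mx iota x) = iota (sqnorm x).
Proof.
rewrite /herm /sqnorm rmorph_sum; apply: eq_bigr => i _.
by rewrite mxE iota_frobenius rmorphXn expr2.
Qed.

Lemma herm_map_qform (M : 'M[F]_n) (x : 'cV[F]_n) :
  herm q (map_mx iota x) (map_mx iota M *m map_mx iota x) = iota (qform M x).
Proof.
rewrite /herm /qform -map_mxM rmorph_sum; apply: eq_bigr => i _.
rewrite !mxE iota_frobenius -rmorphM mulr_sumr; congr (iota _).
by apply: eq_bigr => j _; ring.
Qed.

Lemma Num0'_hyp_i (M : 'M[F]_n) (e : F) :
  e ^+ 2 = -1 -> (2 : F) != 0 -> (1 < n)%N -> hyp_i M ->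
  (0 : L) \in Num0' q (map_mx iota M).
Proof.
move=> e2 two_nz n_gt1 hM.
pose i0 : 'I_n := Ordinal (ltnW n_gt1); pose i1 : 'I_n := Ordinal n_gt1.
have isotropic : sqnorm (col2 i0 i1 1 e) = 0 by rewrite sqnorm_col2 // expr1n e2 addrN.
apply/imsetP; exists (map_mx iota (col2 i0 i1 1 e)).
  by rewrite inE map_mx_eq0 col2_neq0 ?oner_neq0 // herm_map_sqnorm isotropic rmorph0 /=.
by rewrite herm_map_qform (qform_hyp_i _ i0 two_nz hM) isotropic mulr0 rmorph0.
Qed.

Lemma Num0_scaled_sqr (M : 'M[F]_n) (i j : 'I_n) (e a : F) :
  i != j -> e ^+ 2 = -1 ->
  iota ((M i i - M j j + e * (M i j + M j i)) * a ^+ 2) \in Num0 q (map_mx iota M).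
Proof.
move=> ij e2; apply/imsetP; exists (map_mx iota (col2 i j a (e * a))).
  by rewrite inE herm_map_sqnorm sqnorm_col2 // exprMn e2 mulN1r addrN rmorph0.
by rewrite herm_map_qform qform_col2 // exprMn e2; congr (iota _); ring.
Qed.

End HermitianEmbedding.

Lemma not_hyp_i_pair (F : fieldType) n (M : 'M[F]_n) : ~ hyp_i M ->
  exists i j : 'I_n, i != j /\ ((M i i - M j j != 0) || (M i j + M j i != 0)).
Proof.
move=> nhM.
have [/existsP[i /existsP[j /andP[ij ds_nz]]]|none] := boolP
  [exists i, exists j, (i != j) && ((M i i - M j j != 0) || (M i j + M j i != 0))].
  by exists i, j.
have pair_hyp (i j : 'I_n) : i != j -> M i i = M j j /\ M i j + M j i = 0.
  move=> ij; move: none; rewrite negb_exists => /forallP/(_ i); rewrite negb_exists.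
  move=> /forallP/(_ j); rewrite ij negb_or !negbK subr_eq0.
  by case/andP => /eqP ? /eqP.
case: nhM; split => [i j lt_ij | i j].
  have ij : i != j by apply: contraTneq lt_ij => ->; rewrite ltnn.
  exact: (pair_hyp i j ij).2.
by case: (eqVneq i j) => [-> // | /pair_hyp[]].
Qed.

Lemma sqrt_opp1_avoid (F : idomainType) (e d s : F) :
  e ^+ 2 = -1 -> (2 : F) != 0 -> (d != 0) || (s != 0) ->
  exists2 e' : F, e' ^+ 2 = -1 & d + e' * s != 0.
Proof.
move=> e2 two_nz ds_nz; have [des0|] := eqVneq (d + e * s) 0; last by exists e.
exists (- e); first by rewrite sqrrN.
apply: contraTneq ds_nz => dmes0.
have two_d : 2 * d = (d + e * s) + (d + - e * s) by ring.
have d0 : d = 0.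
  by apply/eqP; move: two_d; rewrite des0 dmes0 addr0 => /eqP; rewrite mulf_eq0 (negbTE two_nz).
have e_nz : e != 0.
  by apply/eqP => e0; move: e2; rewrite e0 expr0n => /eqP; rewrite eq_sym oppr_eq0 oner_eq0.
move: des0; rewrite d0 add0r => /eqP; rewrite mulf_eq0 (negbTE e_nz) /= => /eqP ->.
by rewrite eqxx.
Qed.

Lemma leq_card_double_imset (T U : finType) (f : T -> U) (g : T -> T) (A : {set T}) :
  {in A &, forall a b, f a = f b -> a = b \/ a = g b} -> (#|A| <= 2 * #|f @: A|)%N.
Proof.
move=> f_fibres; have [->|[a0 _]] := set_0Vmem A; first by rewrite cards0.
pose r y := odflt a0 [pick a in A | f a == y].
have r_section a : a \in A -> r (f a) \in A /\ f (r (f a)) = f a.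
  move=> aA; rewrite /r; case: pickP => [b /andP[bA /eqP fb] | none] //=.
  by have := none a; rewrite aA eqxx.
have : A \subset r @: (f @: A) :|: (g \o r) @: (f @: A).
  apply/subsetP => a aA; have [rA fr] := r_section a aA; rewrite inE.
  have faB : f a \in f @: A by apply: imset_f.
  case: (f_fibres a _ aA rA (esym fr)) => ->; apply/orP; [left | right].
    by apply: imset_f.
  by apply/imsetP; exists (f a).
move/subset_leq_card/leq_trans; apply; rewrite mul2n -addnn.
by apply: leq_trans (leq_card_setU _ _) _; rewrite leq_add ?leq_imset_card.
Qed.

Lemma card_scaled_nonzero_sqr (F : finFieldType) (c : F) : c != 0 ->
  (#|F|.-1 <= 2 * #|[set (c * a ^+ 2)%R | a in [set a : F | a != 0%R]]|)%N.
Proof.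
move=> c_nz; have -> : #|F|.-1 = #|[set a : F | a != 0]|.
  by rewrite -(cardC1 0); apply: eq_card => a; rewrite !inE.
apply: (leq_card_double_imset (g := -%R)) => a b _ _ /(mulfI c_nz) /eqP.
by rewrite eqf_sqr => /orP[] /eqP; [left | right].
Qed.

Theorem corollary4 (q n : nat) (F L : finFieldType) (iota : {rmorphism F -> L})
    (M : 'M[F]_n) :
  #|F| = q -> #|L| = (q ^ 2)%N -> (q %% 4 = 1)%N -> (2 <= n)%N ->
  (hyp_i M ->
     (forall (i : 'I_n) (k : F), Numk_q M k = [set k * M i i]) /\
     (0 : L) \in Num0' q (map_mx iota M)) /\
  (~ hyp_i M ->
     leq ((q - 1) %/ 2)%N #|[set a : F | (a != 0) && (iota a \in Num0 q (map_mx iota M))]|).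
Proof.
move=> card_F _ card_mod4 n_gt1; rewrite -card_F in card_mod4.
have [e e2 two_nz] := finField_sqrt_opp1 card_mod4.
split => [hM | nhM].
  split => [i k|]; first exact: Numk_q_hyp_i e2 two_nz n_gt1 hM.
  exact (Num0'_hyp_i iota card_F e2 two_nz n_gt1 hM).
have [i [j [ij ds_nz]]] := not_hyp_i_pair nhM.
have [e' e'2 c_nz] := sqrt_opp1_avoid e2 two_nz ds_nz.
pose c := M i i - M j j + e' * (M i j + M j i).
have sqr_sub : [set c * a ^+ 2 | a in [set a : F | a != 0]]
    \subset [set a : F | (a != 0) && (iota a \in Num0 q (map_mx iota M))].
  apply/subsetP => y /imsetP[a a_nz ->]; move: a_nz; rewrite !inE => a_nz.
  by rewrite mulf_neq0 ?expf_neq0 // (Num0_scaled_sqr iota card_F _ _ ij e'2).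
have := leq_trans (card_scaled_nonzero_sqr c_nz) (leq_mul (leqnn 2) (subset_leq_card sqr_sub)).
by rewrite card_F; lia.
Qed.
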